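(* There exists an infinite class of feasible configurations with span $\sigma=1$ such that, for each configuration $G$ of this class, every dedicated leader election algorithm for $G$ takes time $\Omega(n)$, where $n$ is the size (number of nodes) of $G$.
   Context: Model. A configuration is a finite simple undirected connected graph $G$ in which each node $v$ is tagged with a non-negative integer $t_v$ (wakeup tag); smallest tag $0$, span $\sigma$ = largest tag; its size is its number of nodes $n$. Nodes are anonymous and communicate in synchronous global rounds. A node $v$ wakes up in the first global round $r\le t_v$ in which it receives a message, if any, and otherwise in global round $t_v$; its local clock is $0$ in its wakeup round, it acts from local round $1$, and nodes do not know the global clock. In each round a node transmits a message to all neighbours, listens, or terminates. A listening node receives $M$ if exactly one neighbour transmits ($M$), hears collision noise (distinct from silence and messages) if at least two neighbours transmit, and silence otherwise; a transmitting node hears nothing. A DRIP is a common function mapping a node's history (what it heard in each local round $0,\ldots,i-1$, including whether/by which message it was woken) to its action in local round $i\ge1$, with every node eventually terminating permanently; a decision function maps each node's final history to $\{0,1\}$; a dedicated leader election algorithm for $G$ is a DRIP plus decision function such that exactly one node of $G$ outputs $1$; $G$ is feasible if one exists. The time of such an algorithm is the number of rounds until the nodes terminate. *)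

From mathcomp Require Import all_boot.
Set Implicit Arguments. Unset Strict Implicit. Unset Printing Implicit Defensive.

Record config := Config {
  csize : nat;
  cadj : rel 'I_csize;
  cadj_sym : symmetric cadj;
  cadj_irr : irreflexive cadj;
  cconn : forall u v : 'I_csize, connect cadj u v;
  ctag : 'I_csize -> nat;
  ctag0 : exists v, ctag v = 0 }.

Definition span (G : config) : nat := \max_(v : 'I_(csize G)) ctag v.

(* Messages are natural numbers (encodings of finite strings). *)
Inductive hear := Silence | Noise | Msg of nat.
Definition history := seq hear.
Inductive action := Transmit of nat | Listen | Terminate.

(* A DRIP: common function from history (local rounds 0..i-1) to the action
   in local round i >= 1. *)
Definition drip := history -> action.
Definition decision := history -> bool.

Inductive nstate := Asleep | Active of history | Halted of history.

Section Exec.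
Variables (G : config) (A : drip).
Local Notation V := ('I_(csize G)).

Definition transmits (s : V -> nstate) (u : V) : option nat :=
  if s u is Active h then (if A h is Transmit m then Some m else None) else None.

Definition heard (s : V -> nstate) (v : V) : hear :=
  match pmap (fun u => if cadj v u then transmits s u else None) (enum V) with
  | [::] => Silence
  | [:: m] => Msg m
  | _ => Noise
  end.

Definition step (r : nat) (s : V -> nstate) (v : V) : nstate :=
  match s v with
  | Halted h => Halted h
  | Active h =>
      match A h with
      | Transmit _ => Active (rcons h Silence)
      | Listen => Active (rcons h (heard s v))
      | Terminate => Halted h
      end
  | Asleep =>
      match heard s v with
      | Msg m => if r <= ctag v then Active [:: Msg m]
                 else Asleep (* unreachable: v is awake after round ctag v *)
      | _ => if r == ctag v then Active [:: Silence] (* spontaneous wakeup *)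
             else Asleep
      end
  end.

(* state R = states of all nodes before global round R (after rounds 0..R-1) *)
Fixpoint state (R : nat) : V -> nstate :=
  match R with
  | 0 => fun _ => Asleep
  | R'.+1 => step R' (state R')
  end.

Definition all_halted (R : nat) : Prop :=
  forall v, if state R v is Halted _ then True else False.

Definition hist_of (x : nstate) : history :=
  match x with Asleep => [::] | Active h => h | Halted h => h end.
End Exec.
Arguments state : clear implicits.
Arguments all_halted : clear implicits.
Arguments step : clear implicits.

Definition elects (G : config) (A : drip) (d : decision) : Prop :=
  exists R, all_halted G A R /\
    #|[set v : 'I_(csize G) | d (hist_of (state G A R v))]| = 1.

Definition feasible (G : config) : Prop := exists A d, elects G A d.

(* The class consists of the paths on 2m+3 nodes whose two end nodes have tag 1 and all inner
   nodes tag 0.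

   Feasibility: all inner nodes transmit in their first round, which wakes the end nodes by a
   message.  From then on a wave travels inwards from both ends, every node relaying the first
   message it hears; the two waves collide at the middle node in round m+2, and it is the only
   node that ever hears noise.

   Lower bound: the reflection of the path is a tag-preserving automorphism, so mirror nodes
   always share their history, and after r rounds the history of a node depends only on its
   distances to the two ends truncated at r+1.  If all nodes halt after R < m rounds, every node
   shares its final state with its mirror image or with a neighbour, so no decision function can
   single out exactly one node.  Hence R >= m, i.e. n = 2m+3 <= 5R. *)

From mathcomp Require Import all_boot zify.
Set Implicit Arguments. Unset Strict Implicit. Unset Printing Implicit Defensive.

Definition hear_of (s : seq nat) : hear :=
  match s with [::] => Silence | [:: x] => Msg x | _ => Noise end.

Lemma hear_of_perm (s t : seq nat) : perm_eq s t -> hear_of s = hear_of t.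
Proof.
case: t => [|x [|y t]] st; try by rewrite (perm_small_eq _ st).
by case: s st => [|a [|b s]] // /perm_size.
Qed.

Lemma pmap_if (T rT : Type) (p : pred T) (f : T -> option rT) s :
  pmap (fun x => if p x then f x else None) s = pmap f (filter p s).
Proof. by elim: s => //= x s IHs; case: (p x) => /=; rewrite IHs. Qed.

Lemma pmap_map (T T' rT : Type) (f : T' -> option rT) (g : T -> T') s :
  pmap f (map g s) = pmap (f \o g) s.
Proof. by elim: s => //= x s ->. Qed.

Lemma eq_minn_pred a b c : minn a c.+1 = minn b c.+1 -> minn a.-1 c = minn b.-1 c.
Proof. lia. Qed.

Lemma eq_minn_succ a b c : minn a c.+1 = minn b c.+1 -> minn a.+1 c = minn b.+1 c.
Proof. lia. Qed.

Section Execution.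
Variables (G : config) (A : drip).
Local Notation V := 'I_(csize G).
Local Notation state := (state G A).

Definition nbrs (v : V) : seq V := [seq u <- enum V | cadj v u].

Lemma nbrs_uniq v : uniq (nbrs v).
Proof. exact/filter_uniq/enum_uniq. Qed.

Lemma heard_perm s v t :
  perm_eq (nbrs v) t -> heard A s v = hear_of (pmap (transmits A s) t).
Proof.
move=> vt; rewrite /heard -/(hear_of _) pmap_if.
by apply: hear_of_perm; apply: perm_pmap.
Qed.

Section Automorphism.
Variable f : V -> V.
Hypotheses (f_inj : injective f) (f_adj : forall u v, cadj (f u) (f v) = cadj u v)
  (f_tag : forall v, ctag (f v) = ctag v).

Lemma nbrs_automorphism v : perm_eq (nbrs (f v)) (map f (nbrs v)).
Proof.
apply: uniq_perm; rewrite ?map_inj_uniq ?nbrs_uniq // => u.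
have [g fK gK] := injF_bij f_inj.
by rewrite -(gK u) mem_map // !(mem_filter (cadj _)) f_adj !mem_enum.
Qed.

Lemma state_automorphism r v : state r (f v) = state r v.
Proof.
elim: r v => [//|r IHr] v.
have heard_f : heard A (state r) (f v) = heard A (state r) v.
  rewrite (heard_perm _ (nbrs_automorphism v)) (heard_perm _ (perm_refl _)) pmap_map.
  by congr hear_of; apply: eq_pmap => u; rewrite /transmits /= IHr.
by rewrite /= /step IHr heard_f f_tag.
Qed.
End Automorphism.

Lemma all_halted_gt0 R : all_halted G A R -> 0 < R.
Proof. by case: R => // halted; have [v _] := ctag0 G; case: (halted v). Qed.

Lemma all_halted_stateD R k v : all_halted G A R -> state (R + k) v = state R v.
Proof.
move=> halted; elim: k => [|k IHk]; first by rewrite addn0.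
by rewrite addnS /= /step IHk; case: (state R v) (halted v).
Qed.

Lemma elects_unique_state d R : elects G A d -> all_halted G A R ->
  exists v, forall w, state R w = state R v -> w = v.
Proof.
case=> R0 [halted0 /eqP/cards1P [v leaders]] halted.
have same w : state R w = state R0 w.
  have [le|/ltnW le] := leqP R R0; rewrite -(subnKC le) all_halted_stateD //.
have v_leader : v \in [set u | d (hist_of (state R0 u))] by rewrite leaders set11.
exists v => w Ew; apply/set1P; rewrite -leaders inE -same Ew same.
by rewrite inE in v_leader.
Qed.
End Execution.

Definition is_msg (x : hear) : bool := if x is Msg _ then true else false.
Definition is_noise (x : hear) : bool := if x is Noise then true else false.

Lemma is_msg_nseq k : is_msg (hear_of (nseq k 0)) = (k == 1).
Proof. by case: k => [|[]]. Qed.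

Lemma is_noise_nseq k : is_noise (hear_of (nseq k 0)) = (1 < k).
Proof. by case: k => [|[]]. Qed.

Lemma find_mkseq (T : Type) (p : pred T) (f : nat -> T) k c :
  (forall j, j < k -> ~~ p (f j)) -> (k < c -> p (f k)) -> find p (mkseq f c) = minn k c.
Proof.
move=> before at_k; elim: c at_k => [//|c IHc] at_k.
rewrite mkseqS -cats1 find_cat has_find size_mkseq IHc => [|k_lt]; last exact/at_k/ltnW.
case: ltnP => [k_lt|c_le]; first lia.
rewrite /=; have [k_c|k_c] := eqVneq k c; first by rewrite -k_c at_k //; lia.
by rewrite (negbTE (before c _)); lia.
Qed.

Section Path.
Variable m : nat.
Local Notation M := m.+1.
Local Notation L := (M + M).
Local Notation V := 'I_L.+1.

Definition path_adj : rel V := fun u v => (u.+1 == v :> nat) || (v.+1 == u :> nat).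
Definition path_tag (v : V) : nat := (v == 0 :> nat) || (v == L :> nat).

Lemma path_adj_sym : symmetric path_adj.
Proof. by move=> u v; rewrite /path_adj orbC. Qed.

Lemma path_adj_irr : irreflexive path_adj.
Proof. by move=> u; rewrite /path_adj; apply/negP; lia. Qed.

Lemma path_connect u v : connect path_adj u v.
Proof.
suff from0 w : connect path_adj ord0 w.
  by apply: connect_trans (from0 v); rewrite (sym_connect_sym path_adj_sym).
case: w => k; elim: k => [|k IHk] k_lt; first exact/eq_connect0/val_inj.
by apply: connect_trans (IHk (ltnW k_lt)) (connect1 _); rewrite /path_adj /= eqxx.
Qed.

Lemma path_tag0 : exists v, path_tag v = 0.
Proof. by exists (inord 1); rewrite /path_tag inordK //=; lia. Qed.

Lemma path_adj_rev (u w : V) : path_adj (rev_ord u) (rev_ord w) = path_adj u w.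
Proof.
move: (ltn_ord u) (ltn_ord w) => u_lt w_lt.
by rewrite /path_adj /=; apply/idP/idP; lia.
Qed.

Lemma path_tag_rev (u : V) : path_tag (rev_ord u) = path_tag u.
Proof.
move: (ltn_ord u) => u_lt; rewrite /path_tag /=.
by rewrite (_ : _ || _ = (u == 0 :> nat) || (u == L :> nat)) //; apply/idP/idP; lia.
Qed.

Definition path_config := Config path_adj_sym path_adj_irr path_connect path_tag0.

Lemma span_path_config : span path_config = 1.
Proof.
apply/eqP; rewrite eqn_leq; apply/andP; split.
  by apply/bigmax_leqP => v _; rewrite /= /path_tag; case: (_ || _).
by apply: leq_trans (leq_bigmax ord0); rewrite /= /path_tag eqxx.
Qed.

Definition prev_node (v : V) : V := inord v.-1.
Definition next_node (v : V) : V := inord v.+1.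

Lemma prev_nodeE (v : V) : prev_node v = v.-1 :> nat.
Proof. by rewrite inordK // (leq_ltn_trans (leq_pred v)). Qed.

Lemma next_nodeE (v : V) : v < L -> next_node v = v.+1 :> nat.
Proof. by move=> v_lt; rewrite inordK. Qed.

Definition hear_pair (a b : option nat) : hear := hear_of (pmap id [:: a; b]).

Section Run.
Variable A : drip.
Local Notation state := (state path_config A).
Local Notation heard := (@heard path_config A).
Local Notation transmits := (@transmits path_config A).

Lemma heard_path s (v : V) : heard s v =
  hear_pair (if 0 < v then transmits s (prev_node v) else None)
            (if v < L then transmits s (next_node v) else None).
Proof.
pose t := (if 0 < v then [:: prev_node v] else [::]) ++ (if v < L then [:: next_node v] else [::]).
have v_le : v <= L by rewrite -ltnS.
have mem_t u : (u \in t) = (0 < v) && (u == v.-1 :> nat) || (v < L) && (u == v.+1 :> nat).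
  rewrite mem_cat; congr orb; case: ifP => // v_lt.
    by rewrite inE -val_eqE /= prev_nodeE.
  by rewrite inE -val_eqE /= next_nodeE.
have nbrs_t : perm_eq (nbrs (G := path_config) v) t.
  apply: uniq_perm; first exact: nbrs_uniq.
    rewrite /t; case: ifP => v_pos; case: ifP => v_lt //=.
    by rewrite inE andbT -val_eqE /= prev_nodeE next_nodeE //; lia.
  move=> u; rewrite mem_filter mem_enum andbT mem_t /= /path_adj.
  by move: (ltn_ord u) => /= u_lt; clear mem_t t; apply/idP/idP; lia.
by rewrite (heard_perm A s nbrs_t) /t; case: (0 < v); case: (v < L).
Qed.

Lemma path_state_rev r (v : V) : state r (rev_ord v) = state r v.
Proof. exact: (state_automorphism (G := path_config) A rev_ord_inj path_adj_rev path_tag_rev). Qed.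

Lemma path_state_local r (i j : V) :
  minn i r.+1 = minn j r.+1 -> minn (L - i) r.+1 = minn (L - j) r.+1 ->
  state r i = state r j.
Proof.
elim: r i j => [//|r IHr] i j ei ej.
have [i_le j_le] : i <= L /\ j <= L := conj (ltn_ord i) (ltn_ord j).
have heard_ij : heard (state r) i = heard (state r) j.
  rewrite !heard_path (_ : 0 < j = (0 < i)) 1?(_ : j < L = (i < L)); try by apply/idP/idP; lia.
  congr hear_pair; case: ifP => // i_in.
    have j_in : 0 < j by lia.
    have dist_prev k : 0 < k -> k <= L -> L - k.-1 = (L - k).+1 by lia.
    rewrite /transmits (IHr (prev_node i) (prev_node j)) // !prev_nodeE ?dist_prev //.
      exact: eq_minn_pred.
    exact: eq_minn_succ.
  have j_in : j < L by lia.
  have dist_next k : k < L -> L - k.+1 = (L - k).-1 by lia.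
  rewrite /transmits (IHr (next_node i) (next_node j)) // !next_nodeE ?dist_next //.
    exact: eq_minn_succ.
  exact: eq_minn_pred.
have tag_ij : path_tag i = path_tag j.
  by rewrite /path_tag (_ : _ || _ = (j == 0 :> nat) || (j == L :> nat)) //; apply/idP/idP; lia.
by rewrite /= /step (IHr i j) ?heard_ij /= ?tag_ij //; lia.
Qed.

Lemma path_state_twin R (v : V) : R < m -> exists2 w, w != v & state R w = state R v.
Proof.
move=> R_lt; have v_le : v <= L := ltn_ord v.
have [far | near] := boolP ((R < v) && (v < L - R)); last first.
  exists (rev_ord v); last exact: path_state_rev.
  by rewrite -val_eqE /=; apply: contra near => /eqP rev_v; lia.
have [next_far | next_near] := ltnP v.+1 (L - R).
  exists (inord v.+1); first by rewrite -val_eqE /= inordK; lia.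
  by apply: path_state_local; rewrite inordK; lia.
exists (inord v.-1); first by rewrite -val_eqE /= inordK; lia.
by apply: path_state_local; rewrite inordK; lia.
Qed.

Lemma path_election_time d R :
  elects path_config A d -> all_halted path_config A R -> m <= R.
Proof.
move=> elected halted; rewrite leqNgt; apply/negP => R_lt.
have [v v_unique] := elects_unique_state elected halted.
have [w w_v Ew] := path_state_twin v R_lt.
by move/eqP: w_v; apply; apply: v_unique.
Qed.
End Run.

(* The schedule of the wave algorithm on the left half 0 <= i <= M of the path; the right half
   mirrors it, so the neighbour M+1 of the middle node behaves like M-1. *)
Definition wave_tx i r : bool := ((0 < i) && (r == 1)) || ((i < M) && (r == i.+2)).
Definition wave_cnt i r : nat :=
  ((0 < i) && wave_tx i.-1 r) + wave_tx (if i < M then i.+1 else i.-1) r.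
Definition wave_rec i r : hear :=
  if wave_tx i r then Silence else hear_of (nseq (wave_cnt i r) 0).
Definition wake i : nat := i == 0.
Definition wave_hist i c : history := mkseq (fun k => wave_rec i (k + wake i)) c.
Definition wave_rounds := M.+2.
Definition wave_state i r : nstate :=
  if r <= wake i then Asleep
  else if r - wake i <= wave_rounds then Active (wave_hist i (r - wake i))
  else Halted (wave_hist i wave_rounds).

(* [size h] is the current local round. *)
Definition wave_drip : drip := fun h =>
  if wave_rounds <= size h then Terminate
  else if (size h == 1) || (size h == (find is_msg h).+1) then Transmit 0 else Listen.

Lemma wave_rec_msg i r : i <= M ->
  is_msg (wave_rec i r) = (i < M) && ((r == i.+1) || (i.+1 < M) && (r == i.+3)).
Proof.
move=> i_le; rewrite /wave_rec /wave_cnt; have [i_M|i_M|->] := ltngtP i M; try lia.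
all: rewrite /wave_tx; case: ifP => /= tx; rewrite ?is_msg_nseq; apply/idP/idP; move: tx; lia.
Qed.

Lemma wave_rec_noise i r : i <= M -> is_noise (wave_rec i r) = (i == M) && (r == M.+1).
Proof.
move=> i_le; rewrite /wave_rec /wave_cnt; have [i_M|i_M|->] := ltngtP i M; try lia.
all: rewrite /wave_tx; case: ifP => /= tx; rewrite ?is_noise_nseq; apply/idP/idP; move: tx; lia.
Qed.

Lemma wave_drip_hist i c : i <= M -> 0 < c < wave_rounds ->
  wave_drip (wave_hist i c) = if wave_tx i (c + wake i) then Transmit 0 else Listen.
Proof.
move=> i_le /andP[c_pos c_lt]; rewrite /wave_drip size_mkseq leqNgt c_lt /=.
have first_msg : find is_msg (wave_hist i c) = minn (if i < M then i.+1 - wake i else c) c.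
  by apply: find_mkseq => [j|]; rewrite wave_rec_msg // /wake; case: ifP => i_M; lia.
rewrite first_msg /wave_tx /wake; congr (if _ then _ else _).
by case: ifP => i_M; apply/idP/idP; lia.
Qed.

Lemma wave_tx_range i r : wave_tx i r -> wake i < r <= M.+1.
Proof. by rewrite /wave_tx /wake; lia. Qed.

Lemma wave_cnt_asleep i r : r <= wake i -> wave_cnt i r = r.
Proof. by rewrite /wave_cnt /wave_tx /wake; case: ifP; lia. Qed.

Lemma wave_rec_asleep i r : r <= wake i -> wave_rec i r = hear_of (nseq r 0).
Proof.
move=> r_le; rewrite /wave_rec wave_cnt_asleep //.
by case: (boolP (wave_tx i r)) => // /wave_tx_range; lia.
Qed.

Lemma transmits_wave_state s (u : V) r : u <= M -> s u = wave_state u r ->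
  transmits (G := path_config) wave_drip s u = if wave_tx u r then Some 0 else None.
Proof.
move=> u_le su; rewrite /transmits su /wave_state.
have no_tx : ~~ wave_tx u r -> None = if wave_tx u r then Some 0 else None by move/negbTE->.
case: leqP => [r_le|r_gt]; first by apply: no_tx; apply/negP => /wave_tx_range; lia.
case: (ltnP (r - wake u) wave_rounds) => [c_lt|c_ge].
  rewrite ltnW // wave_drip_hist ?subnK ?(ltnW r_gt) //; first by case: wave_tx.
  by apply/andP; split; lia.
have tx_r : ~~ wave_tx u r by apply/negP => /wave_tx_range; rewrite /wave_rounds in c_ge; lia.
by case: leqP => _; rewrite ?/wave_drip ?size_mkseq ?c_ge; apply: no_tx.
Qed.

Section WaveStep.
Variable r : nat.
Local Notation state := (state path_config wave_drip).
Hypothesis state_r : forall u : V, u <= M -> state r u = wave_state u r.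

Lemma heard_wave (i : V) : i <= M -> heard wave_drip (state r) i = hear_of (nseq (wave_cnt i r) 0).
Proof.
move=> i_le.
have tx (u : V) k : u = k :> nat -> k <= M ->
    transmits wave_drip (state r) u = if wave_tx k r then Some 0 else None.
  by move=> <- u_le; apply: transmits_wave_state u_le (state_r u_le).
have tx_prev : (if 0 < i then transmits wave_drip (state r) (prev_node i) else None) =
    if (0 < i) && wave_tx i.-1 r then Some 0 else None.
  by case: ifP => // i_pos; rewrite (tx _ _ (prev_nodeE i)) //; lia.
have i_L : i < L by lia.
have tx_next : transmits wave_drip (state r) (next_node i) =
    if wave_tx (if i < M then i.+1 else i.-1) r then Some 0 else None.
  have [i_M|i_M] := ltnP i M; first by rewrite (tx _ _ (next_nodeE i_L)) //; lia.
  rewrite (_ : transmits _ _ _ = transmits wave_drip (state r) (@rev_ord L.+1 (next_node i))).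
    by rewrite (tx _ i.-1) //= ?next_nodeE //; lia.
  by rewrite /transmits path_state_rev.
rewrite heard_path tx_prev i_L tx_next /wave_cnt.
by case: (_ && _); case: wave_tx.
Qed.

Lemma step_wave (i : V) : i <= M -> step path_config wave_drip r (state r) i = wave_state i r.+1.
Proof.
move=> i_le; have tag_i : ctag (c := path_config) i = wake i.
  by rewrite /= /path_tag /wake (_ : i == L :> nat = false) ?orbF //; lia.
rewrite /step heard_wave // tag_i state_r // /wave_state.
have [r_le|r_gt] := leqP r (wake i).
  rewrite wave_cnt_asleep //; case: ltnP => [r_lt|r_ge].
    by have [-> ->] : r = 0 /\ wake i = 1 by move: r_lt; rewrite /wake; lia.
  have r_wake : r = wake i by lia.
  have -> : r.+1 - wake i = 1 by lia.
  rewrite /wave_hist /mkseq /= add0n -r_wake (wave_rec_asleep r_le) eqxx.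
  have : r <= 1 by rewrite r_wake leq_b1.
  by case: (r) => [|[|]].
rewrite ltnNge (ltnW r_gt) subSn ?(ltnW r_gt) //=.
have [c_lt|c_ge] := ltnP (r - wake i) wave_rounds.
  rewrite ltnW // wave_drip_hist //; last by apply/andP; split; lia.
  rewrite /wave_hist mkseqS -/(wave_hist i _) subnK ?(ltnW r_gt) // /wave_rec.
  by case: wave_tx.
have [c_le|c_gt] := leqP (r - wake i) wave_rounds; last by [].
have c_T : r - wake i = wave_rounds by lia.
by rewrite c_T /wave_drip size_mkseq leqnn.
Qed.
End WaveStep.

Lemma state_wave r (i : V) : i <= M -> state path_config wave_drip r i = wave_state i r.
Proof.
elim: r i => [|r IHr] i i_le; first by rewrite /wave_state leq0n.
exact: step_wave.
Qed.

Definition has_noise : decision := has is_noise.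

Lemma has_noise_wave_hist i : i <= M -> has_noise (wave_hist i wave_rounds) = (i == M).
Proof.
move=> i_le; rewrite /has_noise /wave_hist /mkseq has_map.
apply/hasP/eqP => [[k _]|i_M]; first by rewrite /= wave_rec_noise // => /andP[/eqP].
exists M.+1; first by rewrite mem_iota /wave_rounds; lia.
by rewrite /= wave_rec_noise // i_M /wake /= addn0 !eqxx.
Qed.

Lemma wave_elects : elects path_config wave_drip has_noise.
Proof.
have final (v : V) : state path_config wave_drip wave_rounds.+2 v =
    Halted (wave_hist (minn v (L - v)) wave_rounds).
  wlog v_le : v / v <= M.
    move=> half; have [|v_gt] := leqP v M; first exact: half.
    by rewrite -path_state_rev half /=; [congr (Halted (wave_hist _ _)) | ]; lia.
  rewrite state_wave // /wave_state (_ : minn v (L - v) = v); last lia.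
  by rewrite ifF ?ifF //; apply/negbTE/negP; rewrite /wake; lia.
exists wave_rounds.+2; split; first by move=> v; rewrite final.
apply/eqP/cards1P; exists (inord M); apply/setP => v.
by rewrite !inE final has_noise_wave_hist -?val_eqE /= ?inordK; try lia.
Qed.

End Path.

Theorem proposition2 :
  exists C : config -> Prop,
    (* the class is infinite (contains configurations of unbounded size) *)
    (forall N : nat, exists G, C G /\ N <= csize G) /\
    (* all its members are feasible with span 1 *)
    (forall G, C G -> feasible G /\ span G = 1) /\
    (* Omega(n) lower bound: time >= n / k for a fixed k > 0 *)
    (exists k : nat, 0 < k /\
       forall G, C G -> forall (A : drip) (d : decision), elects G A d ->
         forall R, all_halted G A R -> csize G <= k * R).
Proof.
exists (fun G => exists m, G = path_config m); split; [|split].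
- by move=> N; exists (path_config N); split; [exists N | rewrite /=; lia].
- move=> _ [m ->]; split; last exact: span_path_config.
  by exists (wave_drip m), has_noise; apply: wave_elects.
- exists 5; split => // _ [m ->] A d elected R halted.
  have := path_election_time elected halted; have := all_halted_gt0 halted.
  rewrite /=; lia.
Qed.
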